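(* Let $\mathbb F$ be a field, $\mathcal A$ a commutative $\mathbb F$-algebra, $\Theta,\Sigma$ square matrices of order $m$ with entries in $\mathcal A$, and $\Xi=\mathrm{diag}(a_1,\dots,a_m)$ with $a_1,\dots,a_m\in\mathbb F$ pairwise distinct. Suppose $\Theta\Sigma=\Sigma\Xi$ and that every column of $\Sigma$ contains at least one entry which is a unit of $\mathcal A$. Then $\det\Sigma$ is a unit in $\mathcal A$. *)

From mathcomp Require Import all_boot all_algebra.
Set Implicit Arguments. Unset Strict Implicit. Unset Printing Implicit Defensive.

From mathcomp Require Import all_boot all_algebra.
Import GRing.Theory.
Local Open Scope ring_scope.

(* The identity
   Theta Sigma = Sigma diag(d) says that Sigma intertwines Theta with the
   diagonal matrix of the d_i = a_i%:A, so for every product of shifts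
   P = prod_k (Theta - c_k) we get P Sigma = Sigma diag(prod_k (d_i - c_k)).
   Taking for column j the Lagrange product L_j = prod_{k <> j} (Theta - d_k),
   the diagonal factor vanishes except at position j, where it equals the
   image in A of the nonzero scalar prod_{k <> j} (a_j - a_k), hence a unit.
   So if Sigma_{r j} is a unit, the row r of L_j times Sigma is a unit
   multiple of the j-th unit row vector.  Rescaling these rows gives a left
   inverse of Sigma, so det Sigma is a unit. *)

Section Intertwining.
Variables (R : comPzRingType) (n : nat) (Theta Sigma : 'M[R]_n) (d : 'I_n -> R).
Hypothesis intertwine : Theta *m Sigma = Sigma *m diag_mx (\row_i d i).

Lemma intertwine_shift (c : R) :
  (Theta - c%:M) *m Sigma = Sigma *m diag_mx (\row_i (d i - c)).
Proof.
rewrite mulmxBl intertwine mul_scalar_mx !mul_mx_diag.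
by apply/matrixP => i j; rewrite !mxE mulrBr (mulrC c).
Qed.

Lemma intertwine_prod (I : Type) (r : seq I) (P : pred I) (c : I -> R) :
  (\prod_(k <- r | P k) (Theta - (c k)%:M)) *m Sigma
    = Sigma *m diag_mx (\row_i \prod_(k <- r | P k) (d i - c k)).
Proof.
elim: r => [|k r IH].
  rewrite !big_nil mul1mx mul_mx_diag.
  by apply/matrixP => i j; rewrite !mxE big_nil mulr1.
rewrite big_cons; case Pk: (P k); last first.
  by rewrite IH; congr (_ *m diag_mx _); apply/rowP => i; rewrite !mxE big_cons Pk.
rewrite -mulmxE -mulmxA IH mulmxA intertwine_shift -mulmxA mulmx_diag.
by congr (_ *m diag_mx _); apply/rowP => i; rewrite !mxE big_cons Pk.
Qed.

End Intertwining.

Lemma lagrange_factor_vanish (R : comPzRingType) (n : nat) (d : 'I_n -> R)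
    (i j : 'I_n) :
  i != j -> \prod_(k | k != j) (d i - d k) = 0.
Proof. by move=> neq_ij; rewrite (bigD1 i) //= subrr mul0r. Qed.

(* At its own node, the Lagrange factor built from distinct scalars of F is
   the image of a nonzero element of F, hence a unit of the F-algebra A. *)
Lemma lagrange_factor_unit (F : fieldType) (A : unitAlgType F) (n : nat)
    (a : 'I_n -> F) (j : 'I_n) :
  injective a -> \prod_(k | k != j) ((a j)%:A - (a k)%:A : A) \is a GRing.unit.
Proof.
move=> a_inj; have -> : \prod_(k | k != j) ((a j)%:A - (a k)%:A : A)
    = GRing.in_alg A (\prod_(k | k != j) (a j - a k)).
  by rewrite rmorph_prod; apply: eq_bigr => k _; rewrite rmorphB.
apply: rmorph_unit; rewrite unitfE; apply/prodf_neq0 => k neq_kj.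
by rewrite subr_eq0 (inj_eq a_inj) eq_sym.
Qed.

(* A square matrix such that every unit row vector is a linear combination of
   its rows is invertible: stacking the combinations gives a left inverse. *)
Lemma unitmx_of_row_combinations (R : comUnitRingType) (n : nat)
    (Sigma : 'M[R]_n) (W : 'I_n -> 'rV[R]_n) :
  (forall j, W j *m Sigma = delta_mx 0 j) -> Sigma \in unitmx.
Proof.
move=> hW; have left_inv : \matrix_j W j *m Sigma = 1%:M.
  by apply/row_matrixP => j; rewrite row_mul rowK hW row1.
by have [_] := mulmx1_unit left_inv.
Qed.

(* For column j, pick a row r j with Sigma (r j) j a unit; the rescaled row
   r j of the Lagrange product L j, times Sigma, is the j-th unit row. *)
Theorem mainTheorem8 (F : fieldType) (A : comUnitAlgType F) (m : nat)
    (Theta Sigma : 'M[A]_m) (a : 'I_m -> F)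
    (a_inj : injective a)
    (hcomm : Theta *m Sigma = Sigma *m diag_mx (\row_i (a i)%:A))
    (hcol : forall j : 'I_m, exists i : 'I_m, Sigma i j \is a GRing.unit) :
  \det Sigma \is a GRing.unit.
Proof.
pose d i : A := (a i)%:A.
pose L j := \prod_(k | k != j) (Theta - (d k)%:M).
pose g j := \prod_(k | k != j) (d j - d k).
have [r unit_r] := fin_all_exists hcol.
have unit_pivot j : Sigma (r j) j * g j \is a GRing.unit.
  by rewrite unitrM unit_r lagrange_factor_unit.
rewrite -unitmxE; apply: (@unitmx_of_row_combinations _ _ _
  (fun j => (Sigma (r j) j * g j)^-1 *: row (r j) (L j))) => j.
rewrite -scalemxAl -row_mul (@intertwine_prod _ _ _ _ d hcomm) mul_mx_diag.
apply/rowP => k; rewrite !mxE eqxx /=.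
have [->|neq_kj] := eqVneq k j; first by rewrite mulVr.
by rewrite lagrange_factor_vanish ?mulr0.
Qed.
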